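(* For a $*$-ring $R$ the following are equivalent: (1) $R$ is $*$-clean and $0,1$ are its only projections; (2) $R$ is clean and $0,1$ are its only idempotents; (3) $R$ is a local ring.
   Context: A $*$-ring is a ring with identity with an involution $*$. A projection is $p$ with $p^2=p=p^*$. $R$ is clean if every element is a sum of an idempotent and a unit; $*$-clean if every element is a sum of a projection and a unit. *)

From HB Require Import structures.
From mathcomp Require Import all_boot all_order all_algebra.
Set Implicit Arguments. Unset Strict Implicit. Unset Printing Implicit Defensive.
Import GRing.Theory.
Local Open Scope ring_scope.

Definition involution (R : nzRingType) (star : R -> R) : Prop :=
  [/\ forall x y : R, star (x + y) = star x + star y,
      forall x y : R, star (x * y) = star y * star x
    & forall x : R, star (star x) = x].

Definition is_unit (R : nzRingType) (u : R) : Prop :=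
  exists v : R, u * v = 1 /\ v * u = 1.

Definition idempotent (R : nzRingType) (e : R) : Prop := e * e = e.

Definition projection (R : nzRingType) (star : R -> R) (p : R) : Prop :=
  p * p = p /\ star p = p.

Definition clean (R : nzRingType) : Prop :=
  forall x : R, exists e u : R, idempotent e /\ is_unit u /\ x = e + u.

Definition star_clean (R : nzRingType) (star : R -> R) : Prop :=
  forall x : R, exists p u : R, projection star p /\ is_unit u /\ x = p + u.

Definition only_trivial_idempotents (R : nzRingType) : Prop :=
  forall e : R, idempotent e -> e = 0 \/ e = 1.

Definition only_trivial_projections (R : nzRingType) (star : R -> R) : Prop :=
  forall p : R, projection star p -> p = 0 \/ p = 1.

Definition left_ideal (R : nzRingType) (I : R -> Prop) : Prop :=
  [/\ I 0, (forall x y, I x -> I y -> I (x + y)) & (forall r x, I x -> I (r * x))].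

Definition maximal_left_ideal (R : nzRingType) (I : R -> Prop) : Prop :=
  [/\ left_ideal I, ~ I 1 &
      forall J : R -> Prop, left_ideal J -> ~ J 1 -> (forall x, I x -> J x) ->
        forall x, J x -> I x].

Definition local_ring (R : nzRingType) : Prop :=
  exists I : R -> Prop, maximal_left_ideal I /\
    forall J : R -> Prop, maximal_left_ideal J -> forall x, J x <-> I x.

(** Both cleanness conditions say that every element is an idempotent (resp.
    projection) plus a unit; when 0 and 1 are the only such idempotents, this
    means exactly that for every x either x or 1 - x is a unit. That property
    characterizes local rings: it makes the non-units a left ideal which then
    contains every proper left ideal, and conversely in a local ring every
    element outside the unique maximal left ideal is invertible (by Krull's
    theorem every proper left ideal lies in it). *)

From Pilot Require Import Defs.
From mathcomp Require Import all_boot all_order all_algebra.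
From mathcomp Require Import boolp classical_sets.
Set Implicit Arguments. Unset Strict Implicit. Unset Printing Implicit Defensive.
Import GRing.Theory.
Local Open Scope ring_scope.

Definition unit_or_complement_unit (R : nzRingType) : Prop :=
  forall x : R, is_unit x \/ is_unit (1 - x).

Definition clean_wrt (R : nzRingType) (P : R -> Prop) : Prop :=
  forall x : R, exists e u : R, P e /\ is_unit u /\ x = e + u.

Definition only_trivial_in (R : nzRingType) (P : R -> Prop) : Prop :=
  forall e : R, P e -> e = 0 \/ e = 1.

Section Units.
Variable R : nzRingType.
Implicit Types x e : R.

Lemma is_unit1 : is_unit (1 : R).
Proof. by exists 1; rewrite mulr1. Qed.

Lemma not_is_unit0 : ~ is_unit (0 : R).
Proof. by move=> [v [/esym/eqP + _]]; rewrite mul0r oner_eq0. Qed.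

Lemma is_unitN x : is_unit x -> is_unit (- x).
Proof. by move=> [v [xv vx]]; exists (- v); rewrite !mulrNN. Qed.

Lemma idempotent0 : Defs.idempotent (0 : R).
Proof. exact: mul0r. Qed.

Lemma idempotent1 : Defs.idempotent (1 : R).
Proof. exact: mul1r. Qed.

Lemma idempotent_unit_eq1 e : Defs.idempotent e -> is_unit e -> e = 1.
Proof. by move=> ee [v [ev _]]; rewrite -[LHS]mulr1 -ev mulrA ee. Qed.

Lemma idempotent_unit_subr_eq0 e : Defs.idempotent e -> is_unit (1 - e) -> e = 0.
Proof.
move=> ee [v [ev _]].
by rewrite -[e]mulr1 -ev mulrA mulrBr mulr1 ee subrr mul0r.
Qed.

End Units.

Section CleanWithTrivialIdempotents.
Variables (R : nzRingType) (P : R -> Prop).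
Hypotheses (P_idempotent : forall e, P e -> Defs.idempotent e) (P0 : P 0) (P1 : P 1).

Lemma clean_wrt_only_trivialE :
  clean_wrt P /\ only_trivial_in P <-> unit_or_complement_unit R.
Proof.
split.
  move=> [clP trivP] x; have [e [u [Pe [uu ->]]]] := clP x.
  case: (trivP e Pe) => ->; first by left; rewrite add0r.
  by right; rewrite opprD addrA subrr add0r; apply: is_unitN.
move=> ucu; split.
  move=> x; case: (ucu x) => [ux | u1x].
    by exists 0, x; rewrite add0r.
  exists 1, (x - 1); split=> //; split; last by rewrite addrC subrK.
  by rewrite -opprB; apply: is_unitN.
move=> e /P_idempotent ee; case: (ucu e) => [ue | u1e].
  by right; apply: idempotent_unit_eq1.
by left; apply: idempotent_unit_subr_eq0.
Qed.

End CleanWithTrivialIdempotents.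

Section Projections.
Variables (R : nzRingType) (star : R -> R).
Hypothesis hstar : involution star.

Lemma projection0 : projection star 0.
Proof.
case: hstar => starD _ _; split; first by rewrite mul0r.
by apply: (addrI (star 0)); rewrite addr0 -starD addr0.
Qed.

Lemma projection1 : projection star 1.
Proof.
case: hstar => _ starM starK; split; first by rewrite mul1r.
by have := starM (star 1) 1; rewrite mulr1 starK mulr1 => <-.
Qed.

Lemma projection_idempotent p : projection star p -> Defs.idempotent p.
Proof. by case. Qed.

Lemma star_clean_only_trivial_projectionsE :
  star_clean star /\ only_trivial_projections star <-> unit_or_complement_unit R.
Proof. exact: clean_wrt_only_trivialE projection_idempotent projection0 projection1. Qed.

End Projections.

Section LeftIdeals.
Variable R : nzRingType.
Implicit Types (x y : R) (K : R -> Prop).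

Lemma proper_left_ideal_not_unit K :
  left_ideal K -> ~ K 1 -> forall x, K x -> ~ is_unit x.
Proof. by move=> [_ _ KM] K1 x Kx [v [_ vx]]; apply: K1; rewrite -vx; apply: KM. Qed.

Lemma principal_left_ideal x : left_ideal (fun z : R => exists r, z = r * x).
Proof.
split; first by exists 0; rewrite mul0r.
  by move=> _ _ [r ->] [s ->]; exists (r + s); rewrite mulrDl.
by move=> s _ [r ->]; exists (s * r); rewrite mulrA.
Qed.

Lemma left_ideal_sub_maximal K :
  left_ideal K -> ~ K 1 -> exists M, maximal_left_ideal M /\ forall x, K x -> M x.
Proof.
move=> [K0 KD KM] K1.
(* The empty set is admitted so that the union of the empty chain qualifies. *)
pose Q := fun X : set R => [/\ ~ X 1, (forall x y, X x -> X y -> X (x + y)),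
   (forall r x, X x -> X (r * x)) & ((exists z, X z) -> forall x, K x -> X x)].
have [|A [[A1 AD AM AK] Amax]] := @Zorn_bigcup R Q.
  move=> F FQ Ftot; split.
  - by case=> X FX X1; case: (FQ X FX).
  - move=> x y [X FX Xx] [Y FY Yy].
    have [XY|YX] := Ftot X Y FX FY.
      by exists Y => //; case: (FQ Y FY) => _ YD _ _; apply: YD => //; apply: XY.
    by exists X => //; case: (FQ X FX) => _ XD _ _; apply: XD => //; apply: YX.
  - by move=> r x [X FX Xx]; exists X => //; case: (FQ X FX) => _ _ XM _; apply: XM.
  - move=> [z [X FX Xz]] x Kx; exists X => //.
    by case: (FQ X FX) => _ _ _ XK; apply: XK => //; exists z.
have KA : forall x, K x -> A x.
  apply: AK; apply: contrapT => A_empty; apply: (Amax K); last by split.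
  split; first by move=> z Az; exfalso; apply: A_empty; exists z.
  by move=> KA; apply: A_empty; exists 0; apply: KA.
have A_ideal : left_ideal A by split=> //; rewrite -(mul0r 0); apply/AM/KA.
exists A; split=> //; split=> // J [J0 JD JM] J1 AJ x Jx.
apply: contrapT => nAx; apply: (Amax J); last by split=> // _ y Ky; apply/AJ/KA.
by split=> [|JA]; [exact: AJ | apply/nAx/JA].
Qed.

End LeftIdeals.

Lemma clean_only_trivial_idempotentsE (R : nzRingType) :
  clean R /\ only_trivial_idempotents R <-> unit_or_complement_unit R.
Proof. exact: clean_wrt_only_trivialE (fun _ ee => ee) (@idempotent0 R) (@idempotent1 R). Qed.

Section LocalRings.
Variable R : nzRingType.
Implicit Types (x y : R).

Lemma trivial_idempotents_mulr_eq1 x y :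
  only_trivial_idempotents R -> x * y = 1 -> y * x = 1.
Proof.
move=> triv xy.
have /triv[yx0 | //] : Defs.idempotent (y * x).
  by rewrite /Defs.idempotent mulrA -(mulrA y) xy mulr1.
have : (1 : R) = x * (y * x) * y by rewrite mulrA xy mul1r xy.
by rewrite yx0 mulr0 mul0r => /eqP; rewrite oner_eq0.
Qed.

Lemma unit_or_complement_unit_local : unit_or_complement_unit R -> local_ring R.
Proof.
move=> ucu.
have [_ triv] := (clean_only_trivial_idempotentsE R).2 ucu.
have unit_of_mul x y : is_unit (x * y) -> is_unit y.
  move=> [v [xyv vxy]]; exists (v * x); split; last by rewrite -mulrA.
  by apply: trivial_idempotents_mulr_eq1 => //; rewrite -mulrA.
pose J := fun x : R => ~ is_unit x.
have J_ideal : left_ideal J.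
  split; first exact: not_is_unit0.
    move=> x y Jx Jy [w [_ wxy]]; rewrite mulrDr in wxy.
    have Jwx : ~ is_unit (w * x) by move/unit_of_mul.
    case: (ucu (w * x)) => // u1wx; apply/Jy/(unit_of_mul w).
    by have -> : w * y = 1 - w * x by rewrite -wxy addrC addKr.
  by move=> r x Jx /unit_of_mul.
have J1 : ~ J 1 by apply; apply: is_unit1.
have proper_sub_J K := @proper_left_ideal_not_unit R K.
have J_max : maximal_left_ideal J by split=> // K K_ideal K1 _; exact: proper_sub_J.
exists J; split=> // K [K_ideal K1 Kmax] x; split; first exact: proper_sub_J.
exact: Kmax J J_ideal J1 (proper_sub_J K K_ideal K1) x.
Qed.

Section UniqueMaximal.
Variable I : R -> Prop.
Hypotheses (I_max : maximal_left_ideal I)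
  (I_unique : forall J, maximal_left_ideal J -> forall x, J x <-> I x).

Lemma proper_left_ideal_sub K : left_ideal K -> ~ K 1 -> forall x, K x -> I x.
Proof.
move=> K_ideal K1 x Kx; have [M [M_max KM]] := left_ideal_sub_maximal K_ideal K1.
by apply/(I_unique M_max)/KM.
Qed.

Lemma notin_left_invertible x : ~ I x -> exists y, y * x = 1.
Proof.
move=> nIx; apply: contrapT => ninv; apply/nIx/(proper_left_ideal_sub (principal_left_ideal x)).
  by move=> [r /esym r1]; apply: ninv; exists r.
by exists 1; rewrite mul1r.
Qed.

Lemma notin_unit x : ~ I x -> is_unit x.
Proof.
case: I_max => [[_ ID IM] I1 _] nIx; have [y yx] := notin_left_invertible nIx.
have nIy : ~ I y.
  move=> Iy; have n1xy : ~ I (1 - x * y).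
    by move=> I1xy; apply: I1; rewrite -(subrK (x * y) 1); apply/ID/IM.
  have [z z1xy] := notin_left_invertible n1xy.
  (* x * y is idempotent, so 1 - x * y kills it; invertibility forces x * y = 0 *)
  have xy0 : x * y = 0.
    rewrite -[x * y]mul1r -z1xy -mulrA mulrBl mul1r -mulrA (mulrA y) yx mul1r.
    by rewrite subrr mulr0.
  move: (oner_neq0 R); rewrite -yx -[y * x]mul1r -yx -mulrA (mulrA x) xy0.
  by rewrite mul0r mulr0 eqxx.
have [z zy] := notin_left_invertible nIy.
have zx : z = x by rewrite -[z]mulr1 -yx mulrA zy mul1r.
by exists y; rewrite -{1}zx.
Qed.

End UniqueMaximal.

Lemma local_unit_or_complement_unit : local_ring R -> unit_or_complement_unit R.
Proof.
move=> [I [I_max I_unique]] x; have [[_ ID _] I1 _] := I_max.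
have [Ix | nIx] := pselect (I x); last by left; apply: notin_unit I_max I_unique x nIx.
right; apply: notin_unit I_max I_unique _ _ => I1x.
by apply: I1; rewrite -(subrK x 1); apply: ID.
Qed.

Lemma local_ringE : local_ring R <-> unit_or_complement_unit R.
Proof.
by split; [apply: local_unit_or_complement_unit | apply: unit_or_complement_unit_local].
Qed.

End LocalRings.

Theorem proposition2p6 (R : nzRingType) (star : R -> R) (hstar : involution star) :
  ((star_clean star /\ only_trivial_projections star) <->
     (clean R /\ only_trivial_idempotents R)) /\
  ((clean R /\ only_trivial_idempotents R) <-> local_ring R).
Proof.
by rewrite star_clean_only_trivial_projectionsE // clean_only_trivial_idempotentsE local_ringE.
Qed.
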